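(* Let $D$ be an integral domain. The following are equivalent: (i) $D$ is a PvMD; (ii) $D$ is essential and admits an essential representation of the form $\{D_{\mathfrak p}:\mathfrak p\in Y\}$, where $Y\subseteq\operatorname{Spec}(D)$ is quasi-compact with respect to the Zariski topology.
   Context: All rings are commutative with identity. For an integral domain $D$ with quotient field $K$ and nonzero fractional ideal $I$: $(D:I)=\{x\in K:xI\subseteq D\}$, $I^v=(D:(D:I))$, $I^t=\bigcup\{J^v:J\subseteq I \text{ finitely generated}\}$; $t$-ideals are $(0)$ and ideals with $I=I^t$; $t$-maximal ideals are $t$-ideals maximal among proper $t$-ideals. $D$ is a PvMD if $D_{\mathfrak m}$ is a valuation domain for all $t$-maximal $\mathfrak m$. A valuation overring is essential if it equals $D_{\mathfrak p}$ for a prime $\mathfrak p$; an essential representation of $D$ is a family of essential valuation overrings of $D$ with intersection $D$; $D$ is essential if it has one. The Zariski topology on $\operatorname{Spec}(D)$ has closed sets $V(\mathfrak a)=\{\mathfrak p:\mathfrak a\subseteq\mathfrak p\}$. *)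

(* An integral domain D is an [R : idomainType]; its quotient
   field K is [{fraction R}], and D is identified with its image under
   [FracField.tofrac]. *)
From HB Require Import structures.
From Stdlib Require Import List.
From mathcomp Require Import all_boot all_order all_algebra fraction.
Set Implicit Arguments. Unset Strict Implicit. Unset Printing Implicit Defensive.
Import GRing.Theory.
Local Open Scope ring_scope.

Section Defs.
Variable R : idomainType.
Local Notation K := {fraction R}.
Local Notation emb := (@FracField.tofrac R).

Definition inD (x : K) : Prop := exists r : R, x = emb r.

Definition is_ideal (I : R -> Prop) : Prop :=
  I 0 /\ (forall a b, I a -> I b -> I (a - b)) /\ (forall r a, I a -> I (r * a)).
Definition is_prime (p : R -> Prop) : Prop :=
  is_ideal p /\ ~ p 1 /\ (forall a b, p (a * b) -> p a \/ p b).

Definition embI (I : R -> Prop) (x : K) : Prop := exists a, I a /\ x = emb a.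

Definition colon (A : K -> Prop) (x : K) : Prop := forall a, A a -> inD (x * a).
Definition vclos (A : K -> Prop) (y : K) : Prop := forall x, colon A x -> inD (x * y).
Definition fgen (s : seq R) (y : K) : Prop :=
  exists c : seq R, size c = size s /\ y = emb (\sum_(i < size s) c`_i * s`_i).
Definition tclos (I : R -> Prop) (y : K) : Prop :=
  exists s : seq R, (forall a, a \in s -> I a) /\ vclos (fgen s) y.

Definition is_tideal (I : R -> Prop) : Prop :=
  is_ideal I /\ ((forall a, I a -> a = 0) \/ (forall y, tclos I y <-> embI I y)).
Definition is_tmaximal (m : R -> Prop) : Prop :=
  is_tideal m /\ ~ m 1 /\
  (forall J, is_tideal J -> ~ J 1 -> (forall a, m a -> J a) -> forall a, J a -> m a).

Definition loc (p : R -> Prop) (x : K) : Prop :=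
  exists a s, ~ p s /\ x = emb a / emb s.

Definition is_valuation (V : K -> Prop) : Prop :=
  forall x : K, x != 0 -> V x \/ V x^-1.

Definition PvMD : Prop := forall m, is_tmaximal m -> is_valuation (loc m).

Definition ess_rep (Y : (R -> Prop) -> Prop) : Prop :=
  (forall p, Y p -> is_prime p /\ is_valuation (loc p)) /\
  (forall x : K, (forall p, Y p -> loc p x) <-> inD x).

Definition essential : Prop := exists Y, ess_rep Y.

(* Y (a set of primes) is quasi-compact in the Zariski topology: every cover of
   Y by open sets Spec(D) \ V(a_i) has a finite subcover. *)
Definition zariski_quasi_compact (Y : (R -> Prop) -> Prop) : Prop :=
  forall (I : Type) (a : I -> R -> Prop),
    (forall p, Y p -> exists i, ~ (forall r, a i r -> p r)) ->
    exists s : seq I, forall p, Y p ->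
      exists i, Stdlib.Lists.List.In i s /\ ~ (forall r, a i r -> p r).
End Defs.

(* (ii) => (i): let m be a nonzero t-maximal ideal and x <> 0 with neither x
   nor x^-1 in D_m. For p in Y, D_p is a valuation ring, so x or x^-1 times
   some u outside p lies in D, and any such u lies in m. These u cover Y, so
   finitely many u_1, ..., u_n in m already do; since D is the intersection of
   the D_p, every z with all z u_i in D lies in D, i.e. 1 is in
   (u_1, ..., u_n)^v, which is contained in m^t = m.
   (i) => (ii): take Y = t-Max(D). By Zorn every proper t-ideal lies in a
   t-maximal one; t-maximal ideals are prime (m : a is a t-ideal), and D is
   the intersection of the D_m because the conductor (D : x) of D is a
   t-ideal. If the D(a_i) cover t-Max(D), the t-closure of the union of the a_i
   is in no t-maximal ideal, so 1 lies in the v-closure of finitely many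
   elements of finitely many a_i. *)

From mathcomp Require Import all_boot all_order all_algebra fraction.
From mathcomp Require Import generic_quotient.
From mathcomp Require classical_sets.
From Stdlib Require Import Classical.
Set Implicit Arguments. Unset Strict Implicit. Unset Printing Implicit Defensive.
Import GRing.Theory.
Local Open Scope ring_scope.

Section FracNumden.
Local Open Scope quotient_scope.

Lemma frac_numden (R : idomainType) (x : {fraction R}) :
  exists a b : R, b != 0 /\ x = FracField.tofrac a / FracField.tofrac b.
Proof.
elim/quotW: x => r; exists r.1, r.2; split; first exact: denom_ratioP.
have -> : FracField.tofrac r.1 / FracField.tofrac r.2 =
  \pi_({fraction R}) (FracField.mulf (Ratio r.1 1) (FracField.invf (Ratio r.2 1))).
  by rewrite FracField.pi_mul FracField.pi_inv; unlock FracField.tofrac.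
congr (\pi _); rewrite /FracField.mulf /FracField.invf.
rewrite !numden_Ratio ?oner_neq0 ?denom_ratioP // mulr1 mul1r.
by case: r => [[n d] /= dn]; apply: val_inj; rewrite /= /Ratio /insubd insubT.
Qed.

End FracNumden.

Lemma In_mem_map (T : Type) (U : eqType) (f : T -> U) (i : T) (s : seq T) :
  List.In i s -> f i \in map f s.
Proof. by elim: s => [//|j s IH] /= [->|/IH]; rewrite inE ?eqxx // => ->; rewrite orbT. Qed.

Lemma seq_choice (T : eqType) (I : Type) (P : I -> T -> Prop) (s : seq T) :
  (forall b, b \in s -> exists i, P i b) ->
  exists L : seq I, forall b, b \in s -> exists i, List.In i L /\ P i b.
Proof.
elim: s => [|b s IH] hs; first by exists [::].
have [c hc|L hL] := IH; first by apply: hs; rewrite inE hc orbT.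
have [j hj] := hs b (mem_head _ _).
exists (j :: L) => c; rewrite inE => /orP [/eqP ->|/hL [i [hi hci]]].
  by exists j; split=> //; left.
by exists i; split=> //; right.
Qed.

Section ChainUnion.
Import classical_sets.
Local Open Scope classical_set_scope.

Lemma chain_bigcup_seq (T : eqType) (F : set (set T)) (X0 : set T) (s : seq T) :
  F X0 -> total_on F subset -> (forall a, a \in s -> (\bigcup_(X in F) X) a) ->
  exists2 X, F X & forall a, a \in s -> X a.
Proof.
move=> FX0 Ftot; elim: s => [|b s IH] hs; first by exists X0.
have [a ha|X FX hX] := IH; first by apply: hs; rewrite inE ha orbT.
have [Xb FXb Xbb] := hs b (mem_head _ _).
have [XXb|XbX] := Ftot X Xb FX FXb.
  by exists Xb => // a; rewrite inE => /orP [/eqP ->|/hX /XXb].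
by exists X => // a; rewrite inE => /orP [/eqP ->|/hX]; [exact: XbX|].
Qed.

End ChainUnion.

Section PvMD.
Variable R : idomainType.
Local Notation K := {fraction R}.
Local Notation emb := (@FracField.tofrac R).
Implicit Types (I J p m : R -> Prop) (x y : K) (s : seq R).

Lemma inD_emb (a : R) : inD (emb a). Proof. by exists a. Qed.
Lemma inD0 : inD (0 : K). Proof. by exists 0; rewrite rmorph0. Qed.
Lemma inDD x y : inD x -> inD y -> inD (x + y).
Proof. by move=> [a ->] [b ->]; exists (a + b); rewrite rmorphD. Qed.
Lemma inDB x y : inD x -> inD y -> inD (x - y).
Proof. by move=> [a ->] [b ->]; exists (a - b); rewrite rmorphB. Qed.
Lemma inDM x y : inD x -> inD y -> inD (x * y).
Proof. by move=> [a ->] [b ->]; exists (a * b); rewrite rmorphM. Qed.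

Lemma ideal0 I : is_ideal I -> I 0. Proof. by case. Qed.
Lemma idealB I a b : is_ideal I -> I a -> I b -> I (a - b).
Proof. by move=> [_ [h _]]; apply: h. Qed.
Lemma idealM I r a : is_ideal I -> I a -> I (r * a).
Proof. by move=> [_ [_ h]]; apply: h. Qed.

Lemma ideal_notin_neq0 I u : is_ideal I -> ~ I u -> u != 0.
Proof. by move=> hI hu; apply/eqP => u0; apply: hu; rewrite u0; exact: ideal0. Qed.

Lemma locP p x : is_ideal p -> loc p x <-> exists2 u, ~ p u & inD (x * emb u).
Proof.
move=> hp; have emb_neq0 u : ~ p u -> emb u != 0.
  by move=> hu; rewrite tofrac_eq0 (ideal_notin_neq0 hp hu).
split=> [[c [u [hu ->]]]|[u hu [c hc]]].
  by exists u => //; rewrite divfK ?emb_neq0 //; apply: inD_emb.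
by exists c, u; split=> //; rewrite -hc mulfK ?emb_neq0.
Qed.

Lemma loc_inD p x : is_ideal p -> ~ p 1 -> inD x -> loc p x.
Proof. by move=> hp hp1 hx; apply/(locP _ hp); exists 1; rewrite // rmorph1 mulr1. Qed.

Lemma loc_zero p x : (forall a, p a -> a = 0) -> loc p x.
Proof.
move=> hp; have [a [b [b0 ->]]] := frac_numden x.
by exists a, b; split=> // /hp /eqP; apply/negP.
Qed.

Definition vclos_seq s y : Prop :=
  forall x, (forall a, a \in s -> inD (x * emb a)) -> inD (x * y).

Lemma fgen_mem s a : a \in s -> fgen s (emb a).
Proof.
elim: s => [//|b s IH]; rewrite in_cons => /orP [/eqP ->|/IH [c [hc ->]]].
  exists (1 :: nseq (size s) 0); split; first by rewrite /= size_nseq.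
  rewrite /= big_ord_recl /= mul1r big1 ?addr0 // => i _.
  by rewrite /= nth_nseq; case: ifP => _; rewrite mul0r.
exists (0 :: c); split; first by rewrite /= hc.
by rewrite /= big_ord_recl /= mul0r add0r.
Qed.

Lemma colon_fgenP s x :
  colon (fgen s) x <-> forall a, a \in s -> inD (x * emb a).
Proof.
split=> [h a ha|h z [c [_ ->]]]; first exact: h (fgen_mem ha).
rewrite rmorph_sum mulr_sumr; apply: (big_ind (@inD R) inD0 inDD) => i _.
by rewrite rmorphM mulrCA; apply: inDM; [apply: inD_emb|apply/h/mem_nth].
Qed.

Lemma tclosP I y :
  tclos I y <-> exists s, (forall a, a \in s -> I a) /\ vclos_seq s y.
Proof.
have vP s : vclos (fgen s) y <-> vclos_seq s y.
  by split=> h x hx; apply: h; apply/colon_fgenP.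
by split=> [] [s [hs /vP hv]]; exists s.
Qed.

Lemma vclos_seq_inD s y : vclos_seq s y -> inD y.
Proof. by move=> h; rewrite -[y]mul1r; apply: h => a _; rewrite mul1r; apply: inD_emb. Qed.

Lemma vclos_seq_mem s a : a \in s -> vclos_seq s (emb a).
Proof. by move=> ha x; apply. Qed.

Lemma vclos_seq_trans s S y :
  (forall a, a \in s -> vclos_seq S (emb a)) -> vclos_seq s y -> vclos_seq S y.
Proof. by move=> h hy x hx; apply: hy => a ha; apply: h. Qed.

Lemma vclos_seq_cat s S y : vclos_seq s y -> vclos_seq (s ++ S) y /\ vclos_seq (S ++ s) y.
Proof.
by move=> h; split=> x hx; apply: h => a ha; apply: hx; rewrite mem_cat ha ?orbT.
Qed.

(* [is_tideal] admits the zero ideal outright, although it is t-closed only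
   when [R] is not a field. *)
Definition tclosed I : Prop := is_ideal I /\ forall y, tclos I y -> embI I y.

Lemma tideal_zero_or_tclosed I :
  is_tideal I -> (forall a, I a -> a = 0) \/ tclosed I.
Proof. by move=> [hI [h|h]]; [left|right; split=> // y /h]. Qed.

Lemma tclosed_tideal I : tclosed I -> is_tideal I.
Proof.
move=> [hI h]; split=> //; right=> y; split; first exact: h.
move=> [a [ha ->]]; apply/tclosP; exists [:: a]; split.
  by move=> b; rewrite inE => /eqP ->.
by apply: vclos_seq_mem; rewrite inE.
Qed.

Lemma tclosed_tclos1 I : tclosed I -> tclos I 1 -> I 1.
Proof.
move=> [_ h] /h [a [ha e]]; suff <- : a = 1 by [].
by apply/eqP; rewrite -(tofrac_eq (R:=R)) -e rmorph1.
Qed.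

Lemma tclosed_conductor x : tclosed (fun r => inD (x * emb r)).
Proof.
split; [split; [|split]|].
- by rewrite rmorph0 mulr0; apply: inD0.
- by move=> a b ha hb; rewrite rmorphB mulrBr; apply: inDB.
- by move=> r a ha; rewrite rmorphM mulrCA; apply: inDM => //; apply: inD_emb.
- move=> y /tclosP [s [hs hv]]; have [t et] := vclos_seq_inD hv.
  by exists t; split=> //; rewrite -et; apply: hv.
Qed.

Lemma tclosed_colon m a : tclosed m -> tclosed (fun r => m (r * a)).
Proof.
move=> [hm hmt]; split; [split; [|split]|].
- by rewrite mul0r; apply: ideal0.
- by move=> r1 r2 h1 h2; rewrite mulrBl; apply: idealB.
- by move=> r r1 h; rewrite -mulrA; apply: idealM.
- move=> y /tclosP [s [hs hv]]; have [t et] := vclos_seq_inD hv.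
  have /hmt [r0 [hr0 e]] : tclos m (emb a * y).
    apply/tclosP; exists (map (fun r => r * a) s); split.
      by move=> c /mapP [r hr ->]; apply: hs.
    move=> x hx; rewrite mulrA; apply: hv => r hr.
    by rewrite -mulrA -rmorphM [a * r]mulrC; apply/hx/map_f.
  exists t; split=> //; suff -> : t * a = r0 by [].
  by apply/eqP; rewrite -(tofrac_eq (R:=R)) rmorphM mulrC -e et.
Qed.

Lemma tclos_mem I a : I a -> tclos I (emb a).
Proof.
move=> ha; apply/tclosP; exists [:: a]; split; last by apply: vclos_seq_mem; rewrite inE.
by move=> b; rewrite inE => /eqP ->.
Qed.

Lemma tclos_seq_vclos I s :
  (forall c, c \in s -> tclos I (emb c)) ->
  exists S, (forall b, b \in S -> I b) /\ forall c, c \in s -> vclos_seq S (emb c).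
Proof.
elim: s => [|b s IH] hs; first by exists [::].
have [c hc|S [hS1 hS2]] := IH; first by apply: hs; rewrite inE hc orbT.
have /tclosP [Sb [hb1 hb2]] := hs b (mem_head _ _).
exists (Sb ++ S); split; first by move=> c; rewrite mem_cat => /orP [/hb1|/hS1].
move=> c; rewrite inE => /orP [/eqP ->|/hS2 hc]; first by case: (vclos_seq_cat S hb2).
by case: (vclos_seq_cat Sb hc).
Qed.

Lemma tclosed_tclos I : tclosed (fun r => tclos I (emb r)).
Proof.
split; [split; [|split]|].
- by apply/tclosP; exists [::]; split=> // x _; rewrite rmorph0 mulr0; apply: inD0.
- move=> c d /tclosP [s1 [h1 v1]] /tclosP [s2 [h2 v2]].
  apply/tclosP; exists (s1 ++ s2); split.
    by move=> z; rewrite mem_cat => /orP [/h1|/h2].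
  move: (vclos_seq_cat s2 v1) (vclos_seq_cat s1 v2) => [{}v1 _] [_ {}v2] x hx.
  by rewrite rmorphB mulrBr; apply: inDB; [apply: v1|apply: v2].
- move=> r c /tclosP [s [hs hv]]; apply/tclosP; exists s; split=> // x hx.
  by rewrite rmorphM mulrCA; apply: inDM; [apply: inD_emb|apply: hv].
- move=> y /tclosP [s [hs hv]]; have [S [hS1 hS2]] := tclos_seq_vclos hs.
  have hy := vclos_seq_trans hS2 hv; have [t et] := vclos_seq_inD hy.
  by exists t; split=> //; rewrite -et; apply/tclosP; exists S.
Qed.

Section Zorn.
Import classical_sets.
Local Open Scope classical_set_scope.

Lemma tclosed_bigcup (F : set (set R)) X0 : F X0 ->
  (forall X, F X -> tclosed X /\ ~ X 1) -> total_on F subset ->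
  tclosed (\bigcup_(X in F) X) /\ ~ (\bigcup_(X in F) X) 1.
Proof.
move=> FX0 hF Ftot; have gather := chain_bigcup_seq FX0 Ftot.
split; last by move=> [X /hF []].
split; [split; [|split]|].
- by have [[hX0 _] _] := hF X0 FX0; exists X0 => //; apply: ideal0.
- move=> a b ha hb.
  have [c|X FX hX] := gather [:: a; b]; first by rewrite !inE => /orP [] /eqP ->.
  have [[hXI _] _] := hF X FX.
  by exists X => //; apply: (idealB hXI); apply: hX; rewrite !inE eqxx ?orbT.
- move=> r a [X FX Xa]; have [[hX _] _] := hF X FX.
  by exists X => //; apply: idealM.
- move=> y /tclosP [s [hs hv]]; have [X FX hX] := gather s hs.
  have [[_ hXt] _] := hF X FX.
  have [c [Xc ->]] : embI X y by apply: hXt; apply/tclosP; exists s.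
  by exists c; split=> //; exists X.
Qed.

Lemma tclosed_sub_tmaximal A : tclosed A -> ~ A 1 ->
  exists m, [/\ is_tmaximal m, tclosed m & forall r, A r -> m r].
Proof.
move=> hA hA1; pose L J := [/\ tclosed J, ~ J 1 & forall r, A r -> J r].
(* [set0] is admitted because [Zorn_bigcup] also bounds the empty chain. *)
pose P J := L J \/ J = set0.
have [M [PM Mmax]] : exists M, P M /\ forall B, M `<` B -> ~ P B.
  apply: Zorn_bigcup => F FP Ftot.
  have [[X0 FX0 [r0 X0r0]]|noX] := classic (exists2 X, F X & exists r, X r).
    have LF X r : F X -> X r -> L X.
      by move=> FX Xr; case: (FP X FX) => // Xe; rewrite Xe in Xr.
    pose FL := [set X | F X /\ L X].
    have -> : \bigcup_(X in F) X = \bigcup_(X in FL) X.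
      apply/seteqP; split=> r [X FX Xr]; exists X => //; last by case: FX.
      by split=> //; apply: LF Xr.
    have FLX0 : FL X0 by split=> //; apply: LF X0r0.
    have [ht h1] : tclosed (\bigcup_(X in FL) X) /\ ~ (\bigcup_(X in FL) X) 1.
      apply: (tclosed_bigcup FLX0); first by move=> X [_ []].
      by move=> X Y [FX _] [FY _]; apply: Ftot.
    have [_ _ X0A] := FLX0.2.
    by left; split=> // r /X0A; exists X0.
  by right; apply/seteqP; split=> // r [X FX Xr]; apply: noX; exists X => //; exists r.
have [hM hM1 hAM] : L M.
  case: PM => // M0; exfalso; apply: (Mmax A); last by left.
  rewrite M0; split; first by [].
  by move=> /(_ 0) h; apply: h; apply: ideal0; case: hA.
exists M; split=> //; split; first exact: tclosed_tideal.
split=> // J hJt hJ1 hMJ r Jr.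
have [hz|hJ] := tideal_zero_or_tclosed hJt; first by rewrite (hz r Jr); apply: ideal0; case: hM.
apply: NNPP => Mr; apply: (Mmax J); last by left; split=> // a /hAM /hMJ.
by split=> // JM; apply: Mr; apply: JM.
Qed.

End Zorn.

Lemma tmaximal_prime m : is_tmaximal m -> is_prime m.
Proof.
move=> [hmt [hm1 hmax]]; have hm : is_ideal m by case: hmt.
split=> //; split=> // a b hab.
have [hz|hmc] := tideal_zero_or_tclosed hmt.
  by move: hab => /hz /eqP; rewrite mulf_eq0 => /orP [] /eqP ->; [left|right]; apply: ideal0.
have [ma|nma] := classic (m a); [by left|right].
have hJ := tclosed_colon a hmc.
apply: (hmax _ (tclosed_tideal hJ)); last by rewrite mulrC.
  by rewrite mul1r.
by move=> r mr; rewrite mulrC; apply: idealM.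
Qed.

Lemma inD_tmaximal x : (forall m, is_tmaximal m -> loc m x) -> inD x.
Proof.
move=> hx; apply: NNPP => nx; have hA := tclosed_conductor x.
have [|m [hm [hmI _] hAm]] := tclosed_sub_tmaximal hA; first by rewrite rmorph1 mulr1.
have /(locP _ hmI) [u mu xu] := hx m hm.
by apply: mu; apply: hAm.
Qed.

Lemma tmaximal_quasi_compact : zariski_quasi_compact (@is_tmaximal R).
Proof.
move=> I a cov; pose Sa r := exists i, a i r.
have [W1|nW1] := classic (tclos Sa (emb 1)); last first.
  have [m [hm _ hWm]] := tclosed_sub_tmaximal (tclosed_tclos Sa) nW1.
  have [i hi] := cov m hm; exfalso; apply: hi => r hr.
  by apply: hWm; apply: tclos_mem; exists i.
have /tclosP [S [hS hv]] := W1; rewrite rmorph1 in hv.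
have [L hL] := seq_choice hS.
have coverL p : is_tmaximal p -> tclosed p ->
    exists i, List.In i L /\ ~ (forall r, a i r -> p r).
  move=> [_ [hp1 _]] hp; apply: NNPP => hn; apply/hp1/(tclosed_tclos1 hp)/tclosP.
  exists S; split=> // b /hL [i [hi hai]].
  by apply: NNPP => pb; apply: hn; exists i; split=> // h; apply/pb/h.
case: (classic (exists2 p0 : R -> Prop, is_tmaximal p0 & forall r, p0 r -> r = 0))
  => [[p0 hp0 hz0]|nz]; last first.
  exists L => p hp; have [hz|] := tideal_zero_or_tclosed (proj1 hp); last exact: coverL.
  by exfalso; apply: nz; exists p.
have [i0 hi0] := cov p0 hp0.
exists (i0 :: L) => p hp; have [hz|hpc] := tideal_zero_or_tclosed (proj1 hp).
  exists i0; split; first by left.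
  by move=> h; apply: hi0 => r /h /hz ->; apply: ideal0; case: hp0 => -[].
by have [i [hi hn]] := coverL p hp hpc; exists i; split=> //; right.
Qed.

Lemma PvMD_ess_rep : PvMD R -> ess_rep (@is_tmaximal R).
Proof.
move=> hP; split; first by move=> p hp; split; [exact: tmaximal_prime|exact: hP].
move=> x; split; first exact: inD_tmaximal.
by move=> hx p [[hp _] [hp1 _]]; exact: loc_inD.
Qed.

Lemma ess_rep_vclos_seq1 Y s : ess_rep Y ->
  (forall p, Y p -> exists2 u, u \in s & ~ p u) -> vclos_seq s 1.
Proof.
move=> [hY hrep] cov z hz; rewrite mulr1; apply/hrep => p Yp.
have [[hp _] _] := hY p Yp; have [u us pu] := cov p Yp.
by apply/(locP _ hp); exists u => //; apply: hz.
Qed.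

Lemma valuation_loc_witness p x : is_ideal p -> is_valuation (loc p) -> x != 0 ->
  exists2 u, ~ p u & inD (x * emb u) \/ inD (x^-1 * emb u).
Proof.
by move=> hp hv x0; case: (hv x x0) => /(locP _ hp) [u pu hu]; exists u => //; [left|right].
Qed.

Lemma quasi_compact_ess_rep_PvMD (Y : (R -> Prop) -> Prop) :
  ess_rep Y -> zariski_quasi_compact Y -> PvMD R.
Proof.
move=> hrep hqc m hmax x x0; have [hmt [hm1 _]] := hmax; have hm : is_ideal m by case: hmt.
have [hz|hmc] := tideal_zero_or_tclosed hmt; first by left; apply: loc_zero.
apply: NNPP => nv; apply: hm1.
have in_m u : inD (x * emb u) \/ inD (x^-1 * emb u) -> m u.
  move=> hu; apply: NNPP => mu; apply: nv.
  by case: hu => ?; [left|right]; apply/(locP _ hm); exists u.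
pose a (i : {u : R | m u}) r := r = sval i.
have [|s hs] := hqc _ a.
  move=> p Yp; have [[hp _] hpv] := proj1 hrep p Yp.
  have [u pu hu] := valuation_loc_witness hp hpv x0.
  by exists (exist _ u (in_m u hu)) => h; apply/pu/h.
apply/(tclosed_tclos1 hmc)/tclosP; exists (map sval s); split.
  elim: s {hs} => [//|i s IH] b; rewrite /= inE => /orP [/eqP ->|/IH //].
  exact: svalP.
apply: (ess_rep_vclos_seq1 hrep) => p /hs [i [hi hpi]].
by exists (sval i); [apply: In_mem_map|move=> pu; apply: hpi => r ->].
Qed.

End PvMD.

Theorem corollary2p7 (R : idomainType) :
  PvMD R <->
  (essential R /\
   exists Y : (R -> Prop) -> Prop, ess_rep Y /\ zariski_quasi_compact Y).
Proof.
split=> [hP|[_ [Y [hrep hqc]]]]; last exact: quasi_compact_ess_rep_PvMD hqc.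
have hrep := PvMD_ess_rep hP.
split; first by exists (@is_tmaximal R).
by exists (@is_tmaximal R); split=> //; apply: tmaximal_quasi_compact.
Qed.
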